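(* Let $1\le k<g$ and $v_1,\dots,v_k\in\mathbb{C}^g$ (column vectors). Let $A$ be the $k\times g$ matrix whose $i$-th row is ${}^tv_i$, and define the vector $w=(w_J)_{J\in P^*_{g-k}(X_g)}$ by $w_J=\epsilon(J,X_g\setminus J)\det(A_{X_g\setminus J})$, where $A_{X_g\setminus J}$ is the $k\times k$ submatrix of $A$ with columns in $X_g\setminus J$ and $\epsilon(J,X_g\setminus J)$ is the sign of the permutation rearranging the concatenation of $J$ and $X_g\setminus J$ (each in increasing order) into $(1,2,\dots,g)$. (Thus $w$ is the coordinate vector of $v_1\wedge\dots\wedge v_k$ in the basis $\{\ast_H e_I\}$ given by the Hodge star.) Then \[ v_1{}^tv_1\ast\dots\ast v_k{}^tv_k=\frac{1}{k!}\,w\,{}^tw, \] as matrices indexed by $P^*_{g-k}(X_g)$.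
   Context: Notation: $X_g=\{1,\dots,g\}$; $P^*_k(X)$ is the set of $k$-element subsets of $X$, written increasingly; $M(I,J)$ is the submatrix with rows $I$, columns $J$. Matrices of maps on $\bigwedge^pV$ ($V=\mathbb{C}^g$) are indexed by $P^*_p(X_g)$. For $A$ on $\bigwedge^pV$, $B$ on $\bigwedge^qV$, $p+q\le g$: \[ (A\sqcap B)^H_K=\binom{p+q}{p}^{-1}\sum_{I\in P^*_p(H),\,J\in P^*_p(K)}(-1)^{s_H(I)+s_K(J)}A^I_J\,B^{H\setminus I}_{K\setminus J},\quad H,K\in P^*_{p+q}(X_g), \] with $s_H(I)$ the sum of positions of elements of $I$ within $H$; iterated products are taken left to right. For $g\times g$ matrices $A_1,\dots,A_k$ ($k<g$), the product $A_1\ast\dots\ast A_k$ is the matrix indexed by $P^*_{g-k}(X_g)$ with \[ (A_1\ast\dots\ast A_k)^I_J=(-1)^{|I|_\Sigma+|J|_\Sigma}(A_1\sqcap\dots\sqcap A_k)^{X_g\setminus I}_{X_g\setminus J}, \] where $|I|_\Sigma$ denotes the sum of the elements of $I$. *)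

From HB Require Import structures.
From mathcomp Require Import all_boot all_order all_algebra.
Set Implicit Arguments. Unset Strict Implicit. Unset Printing Implicit Defensive.
Import Order.TTheory GRing.Theory Num.Theory.
Local Open Scope ring_scope.

(* Index sets: X_g = {1..g} is represented by 'I_g = {0..g-1}, element i <-> i+1.
   P*_p(X_g) is represented by the sets I : {set 'I_g} with #|I| = p.
   A matrix of a map on /\^p V is a function of two such sets. *)
Definition wmx (R : Type) (g : nat) := {set 'I_g} -> {set 'I_g} -> R.

Section Defs.
Variables (R : fieldType) (g : nat).

Definition pos_in (H : {set 'I_g}) (i : 'I_g) : nat := #|[set j in H | (val j <= val i)%N]|.

Definition s_pos (H I : {set 'I_g}) : nat := (\sum_(i in I) pos_in H i)%N.

(* |I|_Sigma : sum of the elements of I (as elements of {1..g}) *)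
Definition sum_elts (I : {set 'I_g}) : nat := (\sum_(i in I) i.+1)%N.

Definition sqcap (p q : nat) (A B : wmx R g) : wmx R g := fun H K =>
  ('C(p + q, p)%:R)^-1 *
  \sum_(I : {set 'I_g} | (I \subset H) && (#|I| == p))
   \sum_(J : {set 'I_g} | (J \subset K) && (#|J| == p))
     (-1) ^+ (s_pos H I + s_pos K J) * A I J * B (H :\: I) (K :\: J).

(* a g x g matrix viewed as a map on /\^1 V (indexed by singletons) *)
Definition of_mx (M : 'M[R]_g) : wmx R g := fun I J =>
  if (#|I| == 1%N) && (#|J| == 1%N) then \sum_(i in I) \sum_(j in J) M i j else 0.

(* left-to-right iterated product P sqcap A_1 sqcap ... , P of degree p *)
Fixpoint sqcap_from (p : nat) (P : wmx R g) (As : seq 'M[R]_g) : wmx R g :=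
  match As with
  | [::] => P
  | A :: As' => sqcap_from p.+1 (sqcap p 1 P (of_mx A)) As'
  end.

Definition sqcap_all (As : seq 'M[R]_g) : wmx R g :=
  match As with
  | [::] => fun _ _ => 0
  | A :: As' => sqcap_from 1 (of_mx A) As'
  end.

Definition star_prod (As : seq 'M[R]_g) : wmx R g := fun I J =>
  (-1) ^+ (sum_elts I + sum_elts J) * sqcap_all As (~: I) (~: J).

Definition inversions (s : seq nat) : nat :=
  (\sum_(a < size s) \sum_(b < size s) ((a < b)%N && (nth 0%N s b < nth 0%N s a)%N))%N.

Definition eps_shuffle (J : {set 'I_g}) : R :=
  (-1) ^+ inversions [seq val i | i <- enum J ++ enum (~: J)].

Definition col_submx (k : nat) (A : 'M[R]_(k, g)) (J : {set 'I_g}) : 'M[R]_k :=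
  \matrix_(i < k, j < k) nth 0 [seq A i c | c <- enum (~: J)] j.

Definition wedge_coord (k : nat) (v : 'I_k -> 'cV[R]_g) (J : {set 'I_g}) : R :=
  let A := \matrix_(i < k, j < g) v i j 0 in
  eps_shuffle J * \det (col_submx A J).

End Defs.

From HB Require Import structures.
From mathcomp Require Import all_boot all_order all_algebra.
From mathcomp Require Import ring zify.
Set Implicit Arguments. Unset Strict Implicit. Unset Printing Implicit Defensive.
Import Order.TTheory GRing.Theory Num.Theory.

(** If [P = s a⊗a] and [Q = b⊗b] then the double sum defining [P ⊓ Q] splits as the
    product of two copies of the single sum defining the wedge [a ∧ b], so
    [P ⊓ Q = s/(p+1) (a∧b)⊗(a∧b)]: symmetric rank-one forms stay rank one.  Iterating,
    [v_1 ᵗv_1 ⊓ ... ⊓ v_k ᵗv_k = 1/k! ω⊗ω] with [ω] the iterated wedge of the [v_i], and a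
    Laplace expansion along the last row identifies [ω_H] with the minor on the columns [H]
    up to a sign depending only on [k].  The remaining signs, [(-1)^{|I|_Σ}] from the Hodge
    star and [ε(I, X_g∖I)], differ by a sign depending only on [|I|]: counting inversions,
    [ε(I, X_g∖I) = (-1)^{|I|_Σ - |I|(|I|+1)/2}]. *)


Lemma sum_ord_ltn n j : (j <= n)%N -> (\sum_(i < n) (i < j))%N = j.
Proof.
move=> le_jn; rewrite -(big_mkord xpredT (fun i => nat_of_bool (i < j))).
rewrite (@big_cat_nat _ _ _ j) //= (@eq_big_nat _ _ _ 0 j _ (fun=> 1%N)); last first.
  by move=> i /andP[_ ->].
rewrite sum_nat_const_nat subn0 muln1 (@eq_big_nat _ _ _ j n _ (fun=> 0%N)).
  by rewrite sum_nat_const_nat muln0 addn0.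
by move=> i /andP[le_ji _]; rewrite ltnNge le_ji.
Qed.

Section SortedEnum.
Variable g : nat.
Implicit Types H : {set 'I_g}.

Lemma sorted_val_enum H : sorted ltn (map val (enum H)).
Proof.
rewrite -[enum _](eq_filter (mem_enum _)) -(eq_filter (mem_map val_inj _)).
by rewrite -filter_map (sorted_filter ltn_trans) // unlock val_ord_enum iota_ltn_sorted.
Qed.

Lemma ltn_nth_enum H (x0 : 'I_g) i j : (i < #|H|)%N -> (j < #|H|)%N ->
  (val (nth x0 (enum H) i) < val (nth x0 (enum H) j))%N = (i < j)%N.
Proof.
have mono a b : (a < #|H|)%N -> (b < #|H|)%N -> (a < b)%N ->
    (val (nth x0 (enum H) a) < val (nth x0 (enum H) b))%N.
  move=> lt_a lt_b lt_ab; rewrite -!(nth_map x0 (val x0) val) -?cardE //.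
  by apply: (sorted_ltn_nth ltn_trans _ (sorted_val_enum H)); rewrite // inE size_map -cardE.
move=> lt_i lt_j; case: (ltngtP i j) => [lt_ij | lt_ji | ->]; first exact: mono.
  by apply/negbTE; rewrite -leqNgt ltnW ?mono.
by rewrite ltnn.
Qed.

Lemma big_set_nth_enum (T : Type) (idx : T) (op : Monoid.com_law idx) H (x0 : 'I_g) n
  (F : 'I_g -> T) : #|H| = n ->
  \big[op/idx]_(x in H) F x = \big[op/idx]_(j < n) F (nth x0 (enum H) j).
Proof. by move<-; rewrite -big_enum (big_nth x0) -cardE big_mkord. Qed.

Lemma pos_inE H x : pos_in H x = (\sum_(y in H) (val y <= val x))%N.
Proof.
rewrite /pos_in -sum1_card big_mkcond [RHS]big_mkcond; apply: eq_bigr => y _.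
by rewrite inE; case: (y \in H); case: (val y <= val x)%N.
Qed.

Lemma pos_in_nth_enum H (x0 : 'I_g) j : (j < #|H|)%N -> pos_in H (nth x0 (enum H) j) = j.+1.
Proof.
move=> lt_j; rewrite pos_inE (big_set_nth_enum _ x0 _ (erefl _)) -[RHS](sum_ord_ltn lt_j).
by apply: eq_bigr => i _; rewrite leqNgt ltn_nth_enum // ltnS -leqNgt.
Qed.

Lemma s_pos_self H : s_pos H H = 'C(#|H|.+1, 2).
Proof.
have [/eqP|/card_gt0P[x0 _]] := posnP #|H|.
  by rewrite cards_eq0 => /eqP->; rewrite /s_pos big_set0 cards0.
rewrite -bin2_sum big_nat_recl //= add0n big_mkord /s_pos (big_set_nth_enum _ x0 _ (erefl _)).
by apply: eq_bigr => j _; rewrite pos_in_nth_enum.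
Qed.

Lemma count_setC_lt_pos_in H i : i \in H ->
  (count (fun y => y < val i) (map val (enum (~: H))) + pos_in H i)%N = i.+1.
Proof.
move=> Hi; have -> : count (fun y => y < val i) (map val (enum (~: H)))
    = (\sum_(y in ~: H) (val y < val i))%N.
  rewrite count_map -sum1_count big_enum_cond big_mkcond [RHS]big_mkcond /=.
  by apply: eq_bigr => y _; case: (y \in ~: H); case: (val y < val i)%N.
rewrite pos_inE -[RHS](sum_ord_ltn (ltn_ord i)) [RHS](bigID (mem H)) /= addnC.
congr (_ + _)%N; apply: eq_big => [y | y]; rewrite ?inE //.
move=> nHy; congr (nat_of_bool _); rewrite [RHS]ltnS [RHS]leq_eqVlt.
case: eqP => //= /val_inj eq_yi.
by move: nHy; rewrite eq_yi Hi.
Qed.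

Lemma s_pos_setD1_nth H (x0 : 'I_g) j : (j < #|H|)%N ->
  (s_pos H (H :\ (nth x0 (enum H) j)) + j.+1)%N = 'C(#|H|.+1, 2).
Proof.
move=> lt_j; have Hh : nth x0 (enum H) j \in H by rewrite -mem_enum mem_nth -?cardE.
rewrite -s_pos_self /s_pos [in RHS](bigD1 (nth x0 (enum H) j)) //= addnC pos_in_nth_enum //.
by congr (_ + _)%N; apply: eq_bigl => y; rewrite !inE andbC.
Qed.
End SortedEnum.

Lemma inversions_cons x s :
  inversions (x :: s) = (count (fun y => y < x) s + inversions s)%N.
Proof.
have count_nth a : count a s = (\sum_(b < size s) a (nth 0%N s b))%N.
  rewrite -sum1_count big_mkcond (big_nth 0%N) big_mkord.
  by apply: eq_bigr => b _; case: (a _).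
rewrite /inversions /= big_ord_recl /= big_ord_recl /= add0n count_nth.
congr (_ + _)%N; apply: eq_bigr => b _; rewrite big_ord_recl /= add0n.
by apply: eq_bigr => c _; rewrite /bump !leq0n !add1n ltnS.
Qed.

Lemma count_lt_head_sorted x s : sorted ltn (x :: s) -> count (fun y => y < x) s = 0%N.
Proof.
move=> /(order_path_min ltn_trans)/allP lt_x; rewrite -(count_pred0 s).
by apply: eq_in_count => y /lt_x lt_xy /=; apply/negbTE; rewrite -leqNgt ltnW.
Qed.

Lemma inversions_sorted s : sorted ltn s -> inversions s = 0%N.
Proof.
elim: s => [|x s IHs] sorted_xs; first by rewrite /inversions big_ord0.
by rewrite inversions_cons count_lt_head_sorted // IHs // (path_sorted sorted_xs).
Qed.

Lemma inversions_cat_sorted s1 s2 : sorted ltn s1 -> sorted ltn s2 ->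
  inversions (s1 ++ s2) = (\sum_(x <- s1) count (fun y => y < x) s2)%N.
Proof.
elim: s1 => [|x s1 IHs1] sorted_s1 sorted_s2; first by rewrite big_nil inversions_sorted.
rewrite cat_cons inversions_cons count_cat count_lt_head_sorted // big_cons IHs1 //.
exact: path_sorted sorted_s1.
Qed.

Lemma inversions_shuffle g (I : {set 'I_g}) :
  (inversions [seq val i | i <- enum I ++ enum (~: I)] + s_pos I I)%N = sum_elts I.
Proof.
rewrite map_cat inversions_cat_sorted ?sorted_val_enum // big_map big_enum /=.
by rewrite /s_pos /sum_elts -big_split; apply: eq_bigr => i; apply: count_setC_lt_pos_in.
Qed.

Local Open Scope ring_scope.

Lemma mulr_signnn (R : pzRingType) m : (-1) ^+ m * (-1) ^+ m = 1 :> R.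
Proof. by rewrite -expr2 sqrr_sign. Qed.

Lemma eps_shuffleE (R : fieldType) g (I : {set 'I_g}) :
  eps_shuffle R I = (-1) ^+ sum_elts I * (-1) ^+ 'C(#|I|.+1, 2) :> R.
Proof.
by rewrite /eps_shuffle -(inversions_shuffle I) s_pos_self exprD -mulrA mulr_signnn mulr1.
Qed.

Lemma nth_rem_nth (T : eqType) (s : seq T) x0 j b : uniq s -> (j < size s)%N ->
  nth x0 (rem (nth x0 s j) s) b = nth x0 s (bump j b).
Proof.
move=> uniq_s lt_j; rewrite remE index_uniq // nth_cat size_take lt_j /bump.
by case: ltnP => [lt_bj | le_jb]; rewrite ?nth_take ?nth_drop ?addSn ?subnKC // add0n leqNgt lt_bj.
Qed.

Lemma enum_setD1 g (H : {set 'I_g}) h : enum (H :\ h) = rem h (enum H).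
Proof.
rewrite rem_filter ?enum_uniq // /enum_mem -filter_predI.
by apply: eq_filter => x /=; rewrite !inE.
Qed.

Lemma setD1_subsets (T : finType) (H : {set T}) p : #|H| = p.+1 ->
  [set I : {set T} | (I \subset H) && (#|I| == p)] = [set H :\ h | h in H].
Proof.
move=> cardH; apply/setP => I; rewrite inE; apply/andP/imsetP => [[subIH /eqP cardI] | [h Hh ->]].
  have /cards1P[h DI] : #|H :\: I| == 1%N.
    by rewrite cardsD (setIidPr subIH) cardI cardH subSnn.
  have /setDP[Hh _] : h \in H :\: I by rewrite DI set11.
  by exists h; rewrite // -DI setDDr setDv set0U (setIidPr subIH).
split; first exact: subD1set.
by move: cardH; rewrite (cardsD1 h) Hh add1n => -[->].
Qed.

Section Wedge.
Variables (R : comPzRingType) (g : nat).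
Implicit Types (H : {set 'I_g}) (a : {set 'I_g} -> R) (x : 'cV[R]_g).

Definition ext1 x H : R := if #|H| == 1%N then \sum_(h in H) x h 0 else 0.

Definition wedge p a (b : {set 'I_g} -> R) H : R :=
  \sum_(I : {set 'I_g} | (I \subset H) && (#|I| == p))
    (-1) ^+ s_pos H I * a I * b (H :\: I).

Fixpoint wedge_seq p a (xs : seq 'cV[R]_g) : {set 'I_g} -> R :=
  if xs is x :: xs' then wedge_seq p.+1 (wedge p a (ext1 x)) xs' else a.

Lemma wedge_seq_rcons p a xs x :
  wedge_seq p a (rcons xs x) = wedge (p + size xs)%N (wedge_seq p a xs) (ext1 x).
Proof.
elim: xs p a => [|y xs IHxs] p a /=; first by rewrite addn0.
by rewrite IHxs addnS.
Qed.

Lemma wedge_ext1 p a x H : #|H| = p.+1 ->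
  wedge p a (ext1 x) H = \sum_(h in H) (-1) ^+ s_pos H (H :\ h) * a (H :\ h) * x h 0.
Proof.
move=> cardH; rewrite /wedge -big_set /= setD1_subsets // big_imset; last first.
  move=> h h' Hh _ eq_D1; apply/eqP; move: (setD11 h H).
  by rewrite eq_D1 !inE Hh andbT => /negbFE.
apply: eq_bigr => h Hh; have -> : H :\: (H :\ h) = [set h].
  by rewrite setDDr setDv set0U; apply/setIidPr; rewrite sub1set.
by rewrite /ext1 cards1 eqxx big_set1.
Qed.

Definition minor_mx (xs : seq 'cV[R]_g) n H : 'M[R]_n :=
  \matrix_(i < n, j < n) nth 0 [seq (nth 0 xs i) c 0 | c <- enum H] j.

(* The sign relating the iterated [wedge] of [n.+1] vectors to their determinant. *)
Fixpoint wedge_sign n : nat :=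
  if n is n'.+1 then (wedge_sign n' + 'C(n.+2, 2) + n')%N else 0%N.

Lemma minor_mx_rcons_max x xs y H (h0 : 'I_g) j : #|H| = (size xs).+2 ->
  minor_mx (x :: rcons xs y) (size xs).+2 H ord_max j = y (nth h0 (enum H) j) 0.
Proof.
by move=> cardH; rewrite mxE (nth_map h0) -?cardE ?cardH //= nth_rcons ltnn eqxx.
Qed.

Lemma minor_mx_rcons_cofactor x xs y H (h0 : 'I_g) (j : 'I_(size xs).+2) :
  #|H| = (size xs).+2 ->
  row' ord_max (col' j (minor_mx (x :: rcons xs y) (size xs).+2 H))
  = minor_mx (x :: xs) (size xs).+1 (H :\ (nth h0 (enum H) j)).
Proof.
move=> cardH; set h := nth h0 (enum H) j.
have Hh : h \in H by rewrite -mem_enum mem_nth -?cardE ?cardH.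
have cardD1 : #|H :\ h| = (size xs).+1.
  by move: cardH; rewrite (cardsD1 h H) Hh add1n => -[].
apply/matrixP => a b; rewrite !mxE.
rewrite (nth_map h0) -?cardE ?cardH //.
rewrite (nth_map h0); last by rewrite -cardE cardD1.
rewrite enum_setD1 nth_rem_nth ?enum_uniq -?cardE ?cardH //= -rcons_cons nth_rcons /=.
have lt_a : (a < (size xs).+1)%N := ltn_ord a.
have -> : bump (size xs).+1 a = a by rewrite /bump leqNgt lt_a.
by rewrite lt_a.
Qed.

Lemma wedge_seq_det x xs H : #|H| = (size xs).+1 ->
  wedge_seq 1 (ext1 x) xs H
  = (-1) ^+ wedge_sign (size xs) * \det (minor_mx (x :: xs) (size xs).+1 H).
Proof.
elim/last_ind: xs H => [|xs y IHxs] H cardH.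
  move/eqP/cards1P: cardH => [h ->].
  by rewrite /= /ext1 cards1 eqxx big_set1 det_mx11 mxE enum_set1 mul1r.
have /card_gt0P[h0 _] : (0 < #|H|)%N by rewrite cardH.
rewrite size_rcons in cardH *; rewrite wedge_seq_rcons wedge_ext1 ?add1n //.
rewrite (big_set_nth_enum _ h0 _ cardH) (expand_det_row _ ord_max) big_distrr /=.
apply: eq_bigr => j _; have lt_j : (j < #|H|)%N by rewrite cardH.
have Hh : nth h0 (enum H) j \in H by rewrite -mem_enum mem_nth -?cardE.
have cardD1 : #|H :\ (nth h0 (enum H) j)| = (size xs).+1.
  by move: cardH; rewrite (cardsD1 (nth h0 (enum H) j) H) Hh add1n => -[].
rewrite IHxs // (minor_mx_rcons_max _ _ h0) // /cofactor (minor_mx_rcons_cofactor _ _ h0) //.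
have := s_pos_setD1_nth h0 lt_j; rewrite cardH => /= <-.
rewrite !exprD !exprS; ring: (mulr_signnn R (size xs)) (mulr_signnn R j).
Qed.
End Wedge.

Section RankOne.
Variables (R : numFieldType) (g : nat).
Implicit Types (a b : {set 'I_g} -> R) (x : 'cV[R]_g) (P Q : wmx R g).

Definition rank1 (s : R) a : wmx R g := fun H K => s * (a H * a K).

Lemma of_mx_outer x : of_mx (x *m x^T) =2 rank1 1 (ext1 x).
Proof.
move=> H K; rewrite /of_mx /rank1 /ext1 mul1r.
case: (#|H| == 1%N); case: (#|K| == 1%N); rewrite ?mulr0 ?mul0r //= big_distrl.
apply: eq_bigr => h _; rewrite big_distrr; apply: eq_bigr => k _.
by rewrite mxE big_ord1 !mxE.
Qed.

Lemma sqcap_rank1 p s a b P Q : P =2 rank1 s a -> Q =2 rank1 1 b ->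
  sqcap p 1 P Q =2 rank1 (s / p.+1%:R) (wedge p a b).
Proof.
move=> PE QE H K; rewrite /sqcap /rank1 /wedge addn1 binSn.
rewrite mulr_suml [RHS]mulr_sumr big_distrr /=; apply: eq_bigr => I _.
rewrite [RHS]mulrA !big_distrr /=; apply: eq_bigr => J _.
by rewrite PE QE /rank1 exprD; ring.
Qed.

Lemma sqcap_from_rank1 p s a xs P : P =2 rank1 s a ->
  sqcap_from p P [seq x *m x^T | x <- xs]
  =2 rank1 (s * p`!%:R / (p + size xs)`!%:R) (wedge_seq p a xs).
Proof.
elim: xs p s a P => [|x xs IHxs] p s a P PE H K /=.
  by rewrite PE addn0 mulfK // pnatr_eq0 -lt0n fact_gt0.
rewrite (IHxs _ _ _ _ (sqcap_rank1 p PE (of_mx_outer x))) /rank1 addSnnS factS natrM.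
by rewrite [s / _ * (_ * _)]mulrA divfK // pnatr_eq0.
Qed.
End RankOne.

Lemma minor_mx_enum (R : fieldType) g k (v : 'I_k -> 'cV[R]_g) J :
  minor_mx [seq v i | i <- enum 'I_k] k (~: J) = col_submx (\matrix_(i < k, j < g) v i j 0) J.
Proof.
apply/matrixP => i j; rewrite !mxE; congr nth; apply: eq_map => c.
by rewrite mxE (nth_map i) ?nth_ord_enum // size_enum_ord.
Qed.

Theorem lemma2p3 (R : numClosedFieldType) (g k : nat) (hk1 : (1 <= k)%N) (hkg : (k < g)%N)
  (v : 'I_k -> 'cV[R]_g) (I J : {set 'I_g})
  (hI : #|I| = (g - k)%N) (hJ : #|J| = (g - k)%N) :
  star_prod [seq v i *m (v i)^T | i <- enum 'I_k] I J
  = (k`!%:R)^-1 * wedge_coord v I * wedge_coord v J.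
Proof.
case: k hk1 hkg v hI hJ => // k _ lt_kg v hI hJ.
have cardC (K : {set 'I_g}) : #|K| = (g - k.+1)%N -> #|~: K| = k.+1.
  by move=> cardK; have := cardsC K; rewrite card_ord cardK; lia.
have -> : [seq v i *m (v i)^T | i <- enum 'I_k.+1]
        = [seq x *m x^T | x <- [seq v i | i <- enum 'I_k.+1]] by exact: map_comp.
rewrite /wedge_coord /star_prod /= -!minor_mx_enum.
have size_vs : size [seq v i | i <- enum 'I_k.+1] = k.+1 by rewrite size_map size_enum_ord.
case: [seq v i | i <- enum 'I_k.+1] size_vs => // x xs [size_xs].
rewrite /= (sqcap_from_rank1 1 xs (of_mx_outer x)) /rank1 -[1`!]/1%N mul1r add1n.
rewrite -size_xs !wedge_seq_det ?size_xs ?cardC // !eps_shuffleE hJ -hI.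
set C := 'C(_, 2); rewrite exprD; ring: (mulr_signnn R (wedge_sign k)) (mulr_signnn R C).
Qed.
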